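(* Consider a quantum data-syndrome code with $n$ qubits and $m$ measurement bits, $N=2n+m$, and parity check matrix $H_{DS}=[F\ \ I_m]\in\mathbb F_2^{m\times N}$, where $F$ is the $m\times 2n$ matrix with rows $f^{(1)},\dots,f^{(m)}$. Let $\mathscr S_{DS}\subseteq\mathbb F_2^N$ be the row span of $H_{DS}$ and $T$ the $|\mathscr S_{DS}|\times N$ matrix whose rows are exactly the elements of $\mathscr S_{DS}$ (each once). Let $\gamma\in\Delta^{D}$. Then in the restriction of $T$ to the columns indexed by $\overline\gamma$, every bit string in $\mathbb F_2^{\overline\gamma}$ appears equally often as a row.
   Context: Phase space representation: a Pauli operator $X^{x_1}Z^{z_1}\otimes\cdots\otimes X^{x_n}Z^{z_n}$ (modulo phases) is identified with $(x,z)\in\mathbb F_2^{2n}$; for $v=(x,z)$ let $\overline v=(z,x)$. The code is given by pairwise commuting stabilizer generators $g^{(1)},\dots,g^{(l)}\in\mathbb F_2^{2n}$ (i.e. $\overline{g^{(i)}}\cdot g^{(j)}=0$) and a classical generator matrix $G_C=[I_l\ A]\in\mathbb F_2^{l\times m}$; $f^{(i)}=\sum_{j=1}^l(G_C)_{j,i}g^{(j)}$ for $i\in[m]$. Errors are $e=(e_d,e_m)\in\mathbb F_2^{2n}\times\mathbb F_2^m=\mathbb F_2^N$, with $\overline e=(\overline{e_d},e_m)$, and syndrome $\mathrm{syn}(e)_i=f^{(i)}\cdot\overline{e_d}+(e_m)_i$, i.e. $\mathrm{syn}(e)=H_{DS}\overline e$. Vectors are identified with support sets in $[N]$; for $\gamma\subseteq[N]$,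 $\overline\gamma$ is its image under the coordinate permutation swapping $i\leftrightarrow i+n$ for $i\in[n]$ and fixing $2n+1,\dots,N$. $\Delta^{D}=\{\gamma\subseteq[N]:\mathrm{syn}(e)\ne0 \text{ for all nonzero } e \text{ with } \mathrm{supp}(e)\subseteq\gamma\}$. *)

From HB Require Import structures.
From mathcomp Require Import all_boot all_order all_algebra.
Set Implicit Arguments. Unset Strict Implicit. Unset Printing Implicit Defensive.
Import GRing.Theory.
Local Open Scope ring_scope.

(* Coordinates are 0-based: index k < n is an x-coordinate, n <= k < 2n a
   z-coordinate, 2n <= k the measurement coordinates. *)
Definition bar_nat (n k : nat) : nat :=
  if (k < n)%N then (k + n)%N else if (k < n + n)%N then (k - n)%N else k.

(* the coordinate permutation i <-> i+n (i < n), fixing coordinates >= 2n;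
   used with K = 2n (for g^(i)) and K = 2n + m (for errors / columns) *)
Definition bar_idx (n K : nat) (i : 'I_K) : 'I_K := insubd i (bar_nat n i).

Definition vbar (n K : nat) (v : 'rV['F_2]_K) : 'rV['F_2]_K :=
  \row_i v 0 (bar_idx n i).

Definition barset (n K : nat) (g : {set 'I_K}) : {set 'I_K} :=
  [set bar_idx n i | i in g].

Definition dotF2 (K : nat) (u v : 'rV['F_2]_K) : 'F_2 := \sum_i u 0 i * v 0 i.

Definition GC (l k : nat) (A : 'M['F_2]_(l, k)) : 'M['F_2]_(l, l + k) :=
  row_mx 1%:M A.

Definition fvec (n l k : nat) (g : 'I_l -> 'rV['F_2]_(n + n))
  (A : 'M['F_2]_(l, k)) (i : 'I_(l + k)) : 'rV['F_2]_(n + n) :=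
  \sum_j GC A j i *: g j.

Definition Fmat (n l k : nat) (g : 'I_l -> 'rV['F_2]_(n + n))
  (A : 'M['F_2]_(l, k)) : 'M['F_2]_(l + k, n + n) :=
  \matrix_(i, j) fvec g A i 0 j.

Definition HDS (n l k : nat) (g : 'I_l -> 'rV['F_2]_(n + n))
  (A : 'M['F_2]_(l, k)) : 'M['F_2]_(l + k, n + n + (l + k)) :=
  row_mx (Fmat g A) 1%:M.

Definition syn (n l k : nat) (g : 'I_l -> 'rV['F_2]_(n + n))
  (A : 'M['F_2]_(l, k)) (e : 'rV['F_2]_(n + n + (l + k))) : 'cV['F_2]_(l + k) :=
  HDS g A *m (vbar n e)^T.

Definition DeltaD (n l k : nat) (g : 'I_l -> 'rV['F_2]_(n + n))
  (A : 'M['F_2]_(l, k)) (gamma : {set 'I_(n + n + (l + k))}) : Prop :=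
  forall e : 'rV['F_2]_(n + n + (l + k)),
    e != 0 -> (forall i, i \notin gamma -> e 0 i = 0) -> syn g A e != 0.

Definition SDS (n l k : nat) (g : 'I_l -> 'rV['F_2]_(n + n))
  (A : 'M['F_2]_(l, k)) : {set 'rV['F_2]_(n + n + (l + k))} :=
  [set s | (s <= HDS g A)%MS].

(* number of rows of T (= elements of S_DS) whose restriction to the
   columns in S equals the restriction of b to S *)
Definition row_count (K : nat) (Sp : {set 'rV['F_2]_K}) (S : {set 'I_K})
  (b : 'rV['F_2]_K) : nat :=
  #|[set s in Sp | [forall i in S, s 0 i == b 0 i]]|.

(** The restriction map [s |-> s|_S] from the row space of [H_DS] to
    [F_2^S], [S = bar gamma], is linear, so all its nonempty fibres are cosets
    of its kernel and have the same size; it remains to see that it is onto.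
    By duality it is onto as soon as no nonzero column vector [c] supported on
    [S] satisfies [H_DS c = 0]; but such a [c] is [bar e] for an error [e]
    supported on [gamma] with [syn e = 0], which [gamma \in Delta^D] excludes. *)

From HB Require Import structures.
From mathcomp Require Import all_boot all_order all_algebra.
From mathcomp Require Import zify.
Set Implicit Arguments. Unset Strict Implicit. Unset Printing Implicit Defensive.
Import GRing.Theory.
Local Open Scope ring_scope.

Lemma bar_natK (n : nat) : involutive (bar_nat n).
Proof.
move=> k; rewrite /bar_nat.
case: (ltnP k n) => [kn|nk]; first by rewrite ifN ?ifT; lia.
case: (ltnP k (n + n)) => [kn2|n2k]; first by rewrite ifT; lia.
by rewrite ifN ?ifN; lia.
Qed.

Lemma bar_nat_lt (n K k : nat) :
  (n + n <= K)%N -> (k < K)%N -> (bar_nat n k < K)%N.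
Proof. rewrite /bar_nat => hK hk; do 2?case: ifP; lia. Qed.

Section Overline.

Variables n K : nat.
Hypothesis hK : (n + n <= K)%N.

Lemma bar_idxE (i : 'I_K) : val (bar_idx n i) = bar_nat n i.
Proof. by rewrite /bar_idx val_insubd bar_nat_lt. Qed.

Lemma bar_idxK : involutive (@bar_idx n K).
Proof. by move=> i; apply: val_inj; rewrite !bar_idxE bar_natK. Qed.

Lemma vbarK : involutive (@vbar n K).
Proof. by move=> v; apply/matrixP => i j; rewrite !mxE bar_idxK (ord1 i). Qed.

Lemma mem_barset (gamma : {set 'I_K}) (i : 'I_K) :
  (bar_idx n i \in barset n gamma) = (i \in gamma).
Proof. exact/mem_imset/(can_inj bar_idxK). Qed.

End Overline.

Section FullRestriction.

Variables (F : fieldType) (m K : nat) (H : 'M[F]_(m, K)) (S : {set 'I_K}).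

Hypothesis kerH_S : forall c : 'cV_K,
  (forall i, i \notin S -> c i 0 = 0) -> H *m c = 0 -> c = 0.

Let P : 'M[F]_K := diag_mx (\row_j (j \in S)%:R).

Lemma restrict_coker_eq0 : P *m cokermx (H *m P) = 0.
Proof.
apply/row_matrixP => i; apply/rowP => j.
have PC_col0 : col j (P *m cokermx (H *m P)) = 0.
  apply: kerH_S => [a aS|]; first by rewrite mul_diag_mx !mxE (negbTE aS) mul0r.
  by rewrite colE mulmxA (mulmxA H) mulmx_coker mul0mx.
by have := congr1 (fun c : 'cV_K => c i 0) PC_col0; rewrite !mxE.
Qed.

Lemma rowspace_restrict_onto (b : 'rV[F]_K) :
  exists2 s : 'rV[F]_K, (s <= H)%MS & {in S, forall i, s 0 i = b 0 i}.
Proof.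
have : (b *m P <= H *m P)%MS by rewrite submxE -mulmxA restrict_coker_eq0 mulmx0.
case/submxP => u bP.
exists (u *m H); first exact: submxMl.
move=> i iS; have := congr1 (fun v : 'rV_K => v 0 i) bP.
by rewrite mulmxA !mul_mx_diag !mxE iS !mulr1.
Qed.

End FullRestriction.

Section RowCount.

Variables (m K : nat) (H : 'M['F_2]_(m, K)) (S : {set 'I_K}).

Let span := [set s : 'rV['F_2]_K | (s <= H)%MS].

Lemma eq_row_count (b b' : 'rV['F_2]_K) :
  {in S, forall i, b 0 i = b' 0 i} -> row_count span S b = row_count span S b'.
Proof.
move=> bb'; apply: eq_card => s; rewrite !inE.
congr (_ && _); apply: eq_forallb_in => i iS; by rewrite bb'.
Qed.

Lemma row_count_span_le (s t : 'rV['F_2]_K) : (s <= H)%MS -> (t <= H)%MS ->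
  (row_count span S s <= row_count span S t)%N.
Proof.
move=> sH tH; rewrite /row_count -(card_imset _ (addIr (t - s))).
apply/subset_leq_card/subsetP => _ /imsetP [x + ->].
rewrite !inE => /andP [xH /forall_inP xs]; apply/andP; split.
  by rewrite addmx_sub // addmx_sub ?eqmx_opp.
apply/forall_inP => i iS; rewrite !mxE (eqP (xs i iS)).
by rewrite addrC addrNK.
Qed.

End RowCount.

Lemma syn_vbar_col (n l k : nat) (g : 'I_l -> 'rV['F_2]_(n + n))
  (A : 'M['F_2]_(l, k)) (c : 'cV['F_2]_(n + n + (l + k))) :
  syn g A (vbar n c^T) = HDS g A *m c.
Proof. by rewrite /syn vbarK ?trmxK // leq_addr. Qed.

Lemma DeltaD_ker_HDS (n l k : nat) (g : 'I_l -> 'rV['F_2]_(n + n))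
  (A : 'M['F_2]_(l, k)) (gamma : {set 'I_(n + n + (l + k))}) :
  DeltaD g A gamma -> forall c : 'cV_(n + n + (l + k)),
  (forall i, i \notin barset n gamma -> c i 0 = 0) -> HDS g A *m c = 0 -> c = 0.
Proof.
move=> hgamma c c_S Hc0; have hK := leq_addr (l + k) (n + n).
suff e0 : vbar n c^T = 0.
  by rewrite -[c]trmxK -[c^T](vbarK hK) e0; apply/matrixP => i j; rewrite !mxE.
apply/eqP; apply: contraT => e_nz; have := hgamma _ e_nz.
rewrite syn_vbar_col Hc0 eqxx; apply=> // a a_gamma.
by rewrite !mxE c_S // mem_barset.
Qed.

Theorem lemma13 (n l k : nat) (g : 'I_l -> 'rV['F_2]_(n + n))
  (A : 'M['F_2]_(l, k))
  (hcomm : forall i j : 'I_l, dotF2 (vbar n (g i)) (g j) = 0%R)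
  (gamma : {set 'I_(n + n + (l + k))})
  (hgamma : DeltaD g A gamma) :
  forall b1 b2 : 'rV['F_2]_(n + n + (l + k)),
    row_count (SDS g A) (barset n gamma) b1 =
    row_count (SDS g A) (barset n gamma) b2.
Proof.
move=> b1 b2.
have [s1 s1H s1b1] := rowspace_restrict_onto (DeltaD_ker_HDS hgamma) b1.
have [s2 s2H s2b2] := rowspace_restrict_onto (DeltaD_ker_HDS hgamma) b2.
rewrite -(eq_row_count _ s1b1) -(eq_row_count _ s2b2).
by apply/eqP; rewrite eqn_leq !row_count_span_le.
Qed.
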